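(* Let $\pi\colon\mathsf{States}\to\mathbb{R}_{\ge0}$ be a potential function. Then $\mathsf{aert}_\pi$ is $\omega$-continuous: for every program $C$ and every $\omega$-chain $F=\{X_1\preceq X_2\preceq\cdots\}$ in $\mathbb{A}_\pi$, $$\mathsf{aert}_\pi[\![C]\!](\sup F)\;=\;\sup\{\mathsf{aert}_\pi[\![C]\!](X)\mid X\in F\}.$$
   Context: States and programs. Fix a finite set $\mathrm{Vars}$ of variables; values are $\mathbb{N}$, locations are $\mathbb{N}_{>0}$. A stack is $s\colon \mathrm{Vars}\to\mathbb{N}$; a heap is a partial map $h$ from a finite set $\mathrm{dom}(h)\subseteq\mathbb{N}_{>0}$ to $\mathbb{N}$. $h_1\perp h_2$ means disjoint domains; then $h_1\star h_2$ is their union; $h_\emptyset$ is the empty heap. $\mathsf{States}$ is the set of pairs $(s,h)$. $s(e)$ is the value of a (heap-independent) arithmetic expression $e$ under $s$, $s\models\varphi$ means the Boolean expression $\varphi$ holds under $s$, $s[x\mapsto v]$ is the updated stack. Programs are generated by $C ::= \mathtt{tick}(e) \mid x:=e \mid x:=\mathtt{alloc}(e) \mid \langle e\rangle:=e' \mid x:=\langle e\rangle \mid \mathtt{free}(e) \mid \{C\}[p]\{C\} \mid \mathtt{if}(\varphi)\{C\}\mathtt{else}\{C\} \mid C;C \mid \mathtt{while}(\varphi)\{C\}$, where $p$ is an expression with $s(p)\in[0,1]\cap\mathbb{Q}$ for all $s$. The statements other than tick, probabilistic choice, conditional, sequencing and loops are called atomic. Runtimes. $\mathbb{T}$ is the set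 of functions $\mathsf{States}\to[0,\infty]$, ordered pointwise by $\preceq$; arithmetic is pointwise with $0\cdot\infty=0$. $[\varphi]$ is the $0/1$-valued Iverson bracket. Truncated subtraction: $a\dot- b=\max(a-b,0)$, $\infty\dot- b=\infty$ for finite $b$, $a\dot-\infty=0$. $(f\oplus g)(s,h)=\min\{f(s,h_1)+g(s,h_2)\mid h=h_1\star h_2\}$; $(f \mathbin{-\!\!\ominus} g)(s,h)=\sup\{g(s,h\star h')\dot- f(s,h')\mid h'\perp h\}$; $(\inf y\colon f)(s,h)=\inf_{v\in\mathbb{N}} f(s[y\mapsto v],h)$, $(\sup y\colon f)(s,h)=\sup_{v\in\mathbb{N}}f(s[y\mapsto v],h)$; $f[x/e](s,h)=f(s[x\mapsto s(e)],h)$. $\mathsf{tm}(e)(s,h)=s(e)$ if $h=h_\emptyset$, else $\infty$; $[e\mapsto e'](s,h)=0$ if $\mathrm{dom}(h)=\{s(e)\}$ and $h(s(e))=s(e')$, else $\infty$; $[e\mapsto -](s,h)=0$ if $\mathrm{dom}(h)=\{s(e)\}$, else $\infty$; $\bigoplus_{i=1}^{e} f_i$ is the separating sum over $i=1,\dots,s(e)$ (empty one: $[\mathsf{emp}]$, which is $0$ if $h=h_\emptyset$, else $\infty$). $\mathsf{ert}[\![C]\!]\colon\mathbb{T}\to\mathbb{T}$ (with $v$ fresh): $\mathsf{ert}[\![\mathtt{tick}(e)]\!](f)=\mathsf{tm}(e)\oplus f$; $\mathsf{ert}[\![x:=e]\!](f)=f[x/e]$; $\mathsf{ert}[\![x:=\mathtt{alloc}(e)]\!](f)=\sup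 v\colon (\bigoplus_{i=1}^{e}[v+i-1\mapsto 0])\mathbin{-\!\!\ominus} f[x/v]$; $\mathsf{ert}[\![\langle e\rangle:=e']\!](f)=[e\mapsto-]\oplus([e\mapsto e']\mathbin{-\!\!\ominus} f)$; $\mathsf{ert}[\![x:=\langle e\rangle]\!](f)=\inf v\colon [e\mapsto v]\oplus([e\mapsto v]\mathbin{-\!\!\ominus} f[x/v])$; $\mathsf{ert}[\![\mathtt{free}(e)]\!](f)=[e\mapsto-]\oplus f$; $\mathsf{ert}[\![C_1;C_2]\!](f)=\mathsf{ert}[\![C_1]\!](\mathsf{ert}[\![C_2]\!](f))$; conditional: $[\varphi]\cdot\mathsf{ert}[\![C_1]\!](f)+[\neg\varphi]\cdot\mathsf{ert}[\![C_2]\!](f)$; probabilistic choice: $p\cdot\mathsf{ert}[\![C_1]\!](f)+(1-p)\cdot\mathsf{ert}[\![C_2]\!](f)$; $\mathsf{ert}[\![\mathtt{while}(\varphi)\{C\}]\!](f)=\mathrm{lfp}\, g.\ [\neg\varphi]\cdot f+[\varphi]\cdot\mathsf{ert}[\![C]\!](g)$. Amortized runtimes. A potential function is $\pi\colon\mathsf{States}\to\mathbb{R}_{\ge0}$. $\mathbb{A}_\pi=\{X\colon\mathsf{States}\to\mathbb{R}\cup\{\infty\}\mid -\pi\le X\}$, ordered pointwise by $\preceq$ (complete lattice, least element $-\pi$; suprema are pointwise). $\mathsf{aert}_\pi[\![C]\!]\colon\mathbb{A}_\pi\to\mathbb{A}_\pi$: $\mathsf{aert}_\pi[\![\mathtt{tick}(e)]\!](X)=e+X$;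 for atomic $C$ other than tick, $\mathsf{aert}_\pi[\![C]\!](X)=\mathsf{ert}[\![C]\!](X+\pi)-\pi$; sequencing by composition; conditional $[\varphi]\cdot\mathsf{aert}_\pi[\![C_1]\!](X)+[\neg\varphi]\cdot\mathsf{aert}_\pi[\![C_2]\!](X)$; probabilistic choice $p\cdot\mathsf{aert}_\pi[\![C_1]\!](X)+(1-p)\cdot\mathsf{aert}_\pi[\![C_2]\!](X)$; $\mathsf{aert}_\pi[\![\mathtt{while}(\varphi)\{C'\}]\!](X)=\mathrm{lfp}\,Y.\ [\neg\varphi]\cdot X+[\varphi]\cdot\mathsf{aert}_\pi[\![C']\!](Y)$ in $(\mathbb{A}_\pi,\preceq)$. *)

From HB Require Import structures.
From mathcomp Require Import all_boot all_order all_algebra.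
From mathcomp Require Import finmap.
From mathcomp Require Import all_classical all_reals ereal.
Set Implicit Arguments.
Unset Strict Implicit.
Unset Printing Implicit Defensive.
Import Order.TTheory GRing.Theory Num.Theory.
Local Open Scope classical_set_scope.
Local Open Scope ereal_scope.

Section Semantics.
Variable R : realType.
Variable Vars : finType.

Definition stack := Vars -> nat.
Definition heap := {h : {fmap nat -> nat} | 0%N \notin domf h}.
Definition state := (stack * heap)%type.

Definition aexpr := stack -> nat.
Definition bexpr := stack -> bool.
Definition prob := {q : rat | ((0 <= q) && (q <= 1))%R}.
Definition pexpr := stack -> prob.

Definition upd (s : stack) (x : Vars) (v : nat) : stack :=
  fun y => if y == x then v else s y.

Inductive prog : Type :=
| Tick of aexpr
| Assign of Vars & aexpr
| Alloc of Vars & aexpr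
| Store of aexpr & aexpr            (* <e> := e' *)
| Lookup of Vars & aexpr             (* x := <e> *)
| Free of aexpr
| PChoice of prog & pexpr & prog
| Ite of bexpr & prog & prog
| Seq of prog & prog
| While of bexpr & prog.

Definition fn := state -> \bar R.

Definition hdisj (h1 h2 : heap) : Prop :=
  forall l, l \in domf (val h1) -> l \notin domf (val h2).
Definition hsplit (h h1 h2 : heap) : Prop :=
  hdisj h1 h2 /\ val h = catf (val h1) (val h2).
Definition hemptyb (h : heap) : bool := domf (val h) == fset0.

Definition tsub (a b : \bar R) : \bar R :=
  if b == +oo then 0 else maxe (a - b) 0.

Definition iv (b : bool) : \bar R := if b then 1 else 0.

Definition sepadd (f g : fn) : fn := fun sh =>
  ereal_inf [set x | exists h1 h2, hsplit sh.2 h1 h2 /\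
                                   x = f (sh.1, h1) + g (sh.1, h2)].
Definition sepwand (f g : fn) : fn := fun sh =>
  ereal_sup [set x | exists h' hh, hdisj h' sh.2 /\ hsplit hh sh.2 h' /\
                                   x = tsub (g (sh.1, hh)) (f (sh.1, h'))].

Definition subst (f : fn) (x : Vars) (e : aexpr) : fn :=
  fun sh => f (upd sh.1 x (e sh.1), sh.2).
Definition substn (f : fn) (x : Vars) (v : nat) : fn :=
  fun sh => f (upd sh.1 x v, sh.2).

Definition tm (e : aexpr) : fn := fun sh =>
  if hemptyb sh.2 then ((e sh.1)%:R)%:E else +oo.
Definition emp : fn := fun sh => if hemptyb sh.2 then 0 else +oo.
Definition pto (l v : nat) : fn := fun sh =>
  if (domf (val sh.2) == [fset l]%fset) && ((val sh.2).[? l]%fmap == Some v)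
  then 0 else +oo.
Definition pto_any (l : nat) : fn := fun sh =>
  if domf (val sh.2) == [fset l]%fset then 0 else +oo.
Definition ptoE (e e' : aexpr) : fn := fun sh => pto (e sh.1) (e' sh.1) sh.
Definition ptoE_any (e : aexpr) : fn := fun sh => pto_any (e sh.1) sh.

Fixpoint sepsum (n : nat) (F : nat -> fn) : fn :=
  match n with
  | 0%N => emp
  | n'.+1 => sepadd (sepsum n' F) (F n'.+1)
  end.
Definition sepsumE (e : aexpr) (F : nat -> fn) : fn :=
  fun sh => sepsum (e sh.1) F sh.

Definition fsup (F : nat -> fn) : fn := fun sh => ereal_sup (range (fun n => F n sh)).
Definition finf (F : nat -> fn) : fn := fun sh => ereal_inf (range (fun n => F n sh)).

Definition lfpT (Phi : fn -> fn) : fn := fun sh =>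
  ereal_inf [set g sh | g in [set g : fn | (forall t, 0 <= g t) /\
                                           (forall t, Phi g t <= g t)]].

Fixpoint ert (C : prog) (f : fn) : fn :=
  match C with
  | Tick e => sepadd (tm e) f
  | Assign x e => subst f x e
  | Alloc x e => fsup (fun v =>
       sepwand (sepsumE e (fun i => pto (v + i - 1) 0)) (substn f x v))
  | Store e e' => sepadd (ptoE_any e) (sepwand (ptoE e e') f)
  | Lookup x e => finf (fun v =>
       sepadd (ptoE e (fun=> v)) (sepwand (ptoE e (fun=> v)) (substn f x v)))
  | Free e => sepadd (ptoE_any e) f
  | PChoice C1 p C2 => fun sh =>
       (ratr (val (p sh.1)))%:E * ert C1 f sh
       + (1 - ratr (val (p sh.1)))%:E * ert C2 f sh
  | Ite phi C1 C2 => fun sh =>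
       iv (phi sh.1) * ert C1 f sh + iv (~~ phi sh.1) * ert C2 f sh
  | Seq C1 C2 => ert C1 (ert C2 f)
  | While phi C' => lfpT (fun g sh =>
       iv (~~ phi sh.1) * f sh + iv (phi sh.1) * ert C' g sh)
  end.

Variable pi : state -> R.

Definition inA (X : fn) : Prop := forall t, - (pi t)%:E <= X t.

Definition lfpA (Phi : fn -> fn) : fn := fun sh =>
  ereal_inf [set Y sh | Y in [set Y : fn | inA Y /\
                                           (forall t, Phi Y t <= Y t)]].

Definition aert_atomic (C : prog) (X : fn) : fn := fun sh =>
  ert C (fun t => X t + (pi t)%:E) sh - (pi sh)%:E.

Fixpoint aert (C : prog) (X : fn) : fn :=
  match C with
  | Tick e => fun sh => ((e sh.1)%:R)%:E + X sh
  | Assign _ _ | Alloc _ _ | Store _ _ | Lookup _ _ | Free _ => aert_atomic C X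
  | PChoice C1 p C2 => fun sh =>
       (ratr (val (p sh.1)))%:E * aert C1 X sh
       + (1 - ratr (val (p sh.1)))%:E * aert C2 X sh
  | Ite phi C1 C2 => fun sh =>
       iv (phi sh.1) * aert C1 X sh + iv (~~ phi sh.1) * aert C2 X sh
  | Seq C1 C2 => aert C1 (aert C2 X)
  | While phi C' => lfpA (fun Y sh =>
       iv (~~ phi sh.1) * X sh + iv (phi sh.1) * aert C' Y sh)
  end.

End Semantics.

From HB Require Import structures.
From mathcomp Require Import all_boot all_order all_algebra.
From mathcomp Require Import finmap.
From mathcomp Require Import all_classical all_reals ereal.
From mathcomp Require Import topology normedtype sequences.
Set Implicit Arguments.
Unset Strict Implicit.
Unset Printing Implicit Defensive.
Import Order.TTheory GRing.Theory Num.Theory.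
Local Open Scope classical_set_scope.
Local Open Scope ereal_scope.

(* By structural induction on programs, each aert_pi[C] maps A_pi into itself
   and commutes with suprema of chains.  For an atomic statement, aert_pi[C] is
   ert[C] conjugated by the shift X |-> X + pi, and ert[C] commutes with all
   suprema of nonnegative runtimes: the magic wand is a supremum of the
   continuous maps x |-> x -. b, and separating addition with a points-to
   predicate is an ordinary addition because that predicate is precise (it
   fixes the domain of the first sub-heap), while the infimum in lookup is
   attained at the stored value.  Probabilistic choice and conditionals combine
   continuous maps linearly, and sequencing composes them, which needs the
   monotonicity that continuity provides along the chain X, Y, Y, ...  The
   least fixed point of a loop is the supremum of its Kleene iterates from -pi;
   each iterate is continuous in the post-runtime, and the two suprema commute. *)

Section ereal_sup_range.
Context {R : realType}.
Implicit Types (u v : nat -> \bar R).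

Lemma ereal_sup_range_ub u n : u n <= ereal_sup (range u).
Proof. by apply: ereal_sup_ubound; exists n. Qed.

Lemma ereal_sup_range_le u y : (forall n, u n <= y) -> ereal_sup (range u) <= y.
Proof. by move=> uy; apply/ereal_supP => _ [n _ <-]. Qed.

Lemma ereal_sup_range_cst (c : \bar R) : ereal_sup (range (fun _ : nat => c)) = c.
Proof. exact: ereal_sup_cst setT0. Qed.

Lemma ereal_sup_rangeDr u (c : R) :
  ereal_sup (range u) + c%:E = ereal_sup (range (fun n => u n + c%:E)).
Proof.
apply/le_anti/andP; split.
- rewrite -leeBrDr //; apply: ereal_sup_range_le => n; rewrite leeBrDr //.
  exact: (ereal_sup_range_ub (fun n => u n + c%:E)).
- by apply: ereal_sup_range_le => n; rewrite leeD2r // ereal_sup_range_ub.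
Qed.

Lemma ereal_sup_rangeZl u (r : R) : (0 <= r)%R ->
  r%:E * ereal_sup (range u) = ereal_sup (range (fun n => r%:E * u n)).
Proof. by move=> r0; rewrite -ereal_supZl ?image_comp //; apply/set0P; exists (u 0%N). Qed.

Lemma ereal_sup_range_max0 u :
  maxe (ereal_sup (range u)) 0 = ereal_sup (range (fun n => maxe (u n) 0)).
Proof.
apply/le_anti/andP; split.
- rewrite ge_max; apply/andP; split; last first.
    by apply: le_trans (ereal_sup_range_ub _ 0%N); rewrite le_max lexx orbT.
  apply: ereal_sup_range_le => n; apply: le_trans (ereal_sup_range_ub _ n).
  by rewrite le_max lexx.
- apply: ereal_sup_range_le => n; rewrite ge_max [X in _ && X]le_max lexx orbT andbT.
  by rewrite le_max ereal_sup_range_ub.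
Qed.

Lemma ereal_sup_rangeD u v : nondecreasing_seq u -> nondecreasing_seq v ->
  -oo < u 0%N -> -oo < v 0%N ->
  ereal_sup (range u) + ereal_sup (range v) = ereal_sup (range (fun n => u n + v n)).
Proof.
move=> nd_u nd_v u0 v0.
have nd_uv : nondecreasing_seq (fun n => u n + v n).
  by move=> m n mn; apply: leeD; [exact: nd_u | exact: nd_v].
have sup_def : ereal_sup (range u) +? ereal_sup (range v).
  rewrite /adde_def.
  have /gt_eqF -> := lt_le_trans u0 (ereal_sup_range_ub u 0%N).
  by have /gt_eqF -> := lt_le_trans v0 (ereal_sup_range_ub v 0%N); rewrite !andbF.
have cvg_sum : (fun n => u n + v n) @ \oo -->
    ereal_sup (range u) + ereal_sup (range v).
  exact: cvgeD sup_def (ereal_nondecreasing_cvgn nd_u) (ereal_nondecreasing_cvgn nd_v).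
rewrite -(cvg_lim (@ereal_hausdorff R) cvg_sum).
by rewrite (cvg_lim (@ereal_hausdorff R) (ereal_nondecreasing_cvgn nd_uv)).
Qed.

Lemma ereal_sup_range_comm (F : nat -> nat -> \bar R) :
  ereal_sup (range (fun k => ereal_sup (range (F k)))) =
  ereal_sup (range (fun n => ereal_sup (range (fun k => F k n)))).
Proof.
apply/le_anti/andP; split; apply: ereal_sup_range_le => i; apply: ereal_sup_range_le => j.
- exact: le_trans (ereal_sup_range_ub (fun k => F k j) i) (ereal_sup_range_ub _ j).
- exact: le_trans (ereal_sup_range_ub (F j) i) (ereal_sup_range_ub _ j).
Qed.

Lemma ereal_inf_range_at (G : nat -> \bar R) (m0 : nat) :
  (forall m, m != m0 -> G m = +oo) -> ereal_inf (range G) = G m0.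
Proof.
move=> Goo; apply/le_anti/andP; split; first by apply: ereal_inf_lbound; exists m0.
apply/ereal_infP => _ [m _ <-]; have [->|/Goo ->] := eqVneq m m0; [exact: lexx | exact: leey].
Qed.

End ereal_sup_range.

Lemma hsplit_fndl (h h1 h2 : heap) : hsplit h h1 h2 -> forall k,
  (val h1).[? k]%fmap = if k \in domf (val h1) then (val h).[? k]%fmap else None.
Proof.
move=> [hd ->] k; case: ifP => k1; last by rewrite not_fnd // k1.
by rewrite fnd_cat (negbTE (hd k k1)).
Qed.

Lemma hsplit_fndr (h h1 h2 : heap) : hsplit h h1 h2 -> forall k,
  (val h2).[? k]%fmap = if k \in domf (val h1) then None else (val h).[? k]%fmap.
Proof.
move=> [hd ->] k; case: ifP => k1; first by rewrite not_fnd // (hd k k1).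
by rewrite fnd_cat; case: ifP => // k2; rewrite !not_fnd ?k1 ?k2.
Qed.

Lemma hsplit_uniq (h h1 h2 h1' h2' : heap) : hsplit h h1 h2 -> hsplit h h1' h2' ->
  domf (val h1) = domf (val h1') -> h1 = h1' /\ h2 = h2'.
Proof.
move=> s s' d; split; apply: val_inj; apply/fmapP => k.
- by rewrite (hsplit_fndl s) (hsplit_fndl s') d.
- by rewrite (hsplit_fndr s) (hsplit_fndr s') d.
Qed.

Fact heap0_key : 0%N \notin domf ([fmap] : {fmap nat -> nat})%fmap.
Proof. by []. Qed.

Definition heap0 : heap := exist _ [fmap]%fmap heap0_key.

Lemma hsplit_heap0 (h : heap) : hsplit h h heap0.
Proof. by split; [move=> l _ | rewrite /= catf0]. Qed.

Lemma hdisj_heap0 (h : heap) : hdisj heap0 h.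
Proof. by []. Qed.

Section ert_atomic.
Context {R : realType} {Vars : finType}.
Local Notation fn := (fn R Vars).

Definition nonneg (f : fn) := forall t, 0 <= f t.

Lemma tsub_ge0 (a b : \bar R) : 0 <= tsub a b.
Proof. by rewrite /tsub; case: ifP => _ //; rewrite le_max lexx orbT. Qed.

Lemma tsub_sup (a : nat -> \bar R) b : (forall n, 0 <= a n) ->
  tsub (ereal_sup (range a)) b = ereal_sup (range (fun n => tsub (a n) b)).
Proof.
move=> a0; rewrite /tsub; case: ifP => [_|boo]; first by rewrite ereal_sup_range_cst.
rewrite -ereal_sup_range_max0; congr maxe; move: boo; case: b => [r||] // _.
  by rewrite ereal_sup_rangeDr.
have sup_gtNy := lt_le_trans (lt_le_trans ltNy0 (a0 0%N)) (ereal_sup_range_ub a 0%N).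
rewrite addey ?gt_eqF //; apply/esym/ereal_supy; exists 0%N => //.
by rewrite addey // gt_eqF // (lt_le_trans ltNy0 (a0 0%N)).
Qed.

Lemma sepwand_ge0 (g f : fn) : nonneg (sepwand g f).
Proof.
move=> [s h]; apply: le_ereal_sup_tmp.
exists (tsub (f (s, h)) (g (s, heap0))); last exact: tsub_ge0.
by exists heap0, h; split; [exact: hdisj_heap0 | split; [exact: hsplit_heap0|]].
Qed.

Lemma sepwand_fsup (g : fn) (F : nat -> fn) : (forall n, nonneg (F n)) ->
  sepwand g (fsup F) = fsup (fun n => sepwand g (F n)).
Proof.
move=> F0; apply: funext => -[s h]; apply/le_anti/andP; split.
- apply/ereal_supP => _ [h' [hh [hd [hs ->]]]].
  rewrite /fsup tsub_sup; last by move=> n; exact: F0.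
  apply: ereal_sup_range_le => n; apply: le_trans (ereal_sup_range_ub _ n).
  by apply: ereal_sup_ubound; exists h', hh.
- apply: ereal_sup_range_le => n; apply/ereal_supP => _ [h' [hh [hd [hs ->]]]].
  apply: le_trans (ereal_sup_ubound _); last by exists h', hh.
  rewrite /fsup tsub_sup; last by move=> m; exact: F0.
  exact: (ereal_sup_range_ub (fun m => tsub (F m (s, hh)) (g (s, h')))).
Qed.

Lemma sepadd_ge0 (g f : fn) : nonneg g -> nonneg f -> nonneg (sepadd g f).
Proof. by move=> g0 f0 [s h]; apply/ereal_infP => _ [h1 [h2 [_ ->]]]; exact: adde_ge0. Qed.

Definition precise (g : fn) := nonneg g /\
  exists D : stack Vars -> {fset nat}, forall s h, g (s, h) != +oo -> domf (val h) = D s.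

Lemma sepadd_precise_cases (g : fn) s h : precise g ->
  (exists h1 h2, hsplit h h1 h2 /\ g (s, h1) != +oo /\
     forall f, nonneg f -> sepadd g f (s, h) = g (s, h1) + f (s, h2)) \/
  (forall f, nonneg f -> sepadd g f (s, h) = +oo).
Proof.
move=> [g0 [D gD]].
have g_oo_add f h1 h2 : nonneg f -> g (s, h1) = +oo -> g (s, h1) + f (s, h2) = +oo.
  by move=> f0 ->; rewrite addye // gt_eqF // (lt_le_trans ltNy0 (f0 _)).
have [[h1 [h2 [hs g1]]]|no_split] :=
  pselect (exists h1 h2, hsplit h h1 h2 /\ g (s, h1) != +oo).
- left; exists h1, h2; split => //; split => // f f0; apply/le_anti/andP; split.
    by apply: ereal_inf_lbound; exists h1, h2.
  apply/ereal_infP => _ [h1' [h2' [hs' ->]]].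
  have [g1'|g1'] := eqVneq (g (s, h1')) +oo; first by rewrite (g_oo_add f h1' h2') // leey.
  by have [<- <-] := hsplit_uniq hs hs' (etrans (gD _ _ g1) (esym (gD _ _ g1'))).
- right => f f0; apply/ereal_inf_pinfty => _ [h1 [h2 [hs ->]]].
  apply: g_oo_add => //; apply/eqP/negPn/negP => g1; apply: no_split.
  by exists h1, h2.
Qed.

Lemma sepadd_fsup (g : fn) (F : nat -> fn) : precise g -> (forall n, nonneg (F n)) ->
  sepadd g (fsup F) = fsup (fun n => sepadd g (F n)).
Proof.
move=> gp F0; have supF0 : nonneg (fsup F).
  by move=> t; apply: le_trans (ereal_sup_range_ub _ 0%N); exact: F0.
apply: funext => -[s h]; rewrite {2}/fsup.
have [[h1 [h2 [_ [g1 gE]]]]|gE] := sepadd_precise_cases s h gp.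
- rewrite (gE _ supF0) (funext (fun n => gE (F n) (F0 n))) /fsup /=.
  have -> : g (s, h1) = (fine (g (s, h1)))%:E.
    by rewrite fineK // ge0_fin_numE ?ltey // gp.1.
  rewrite addeC ereal_sup_rangeDr; do 2!apply: congr1.
  by apply: funext => n; rewrite addeC.
- by rewrite (gE _ supF0) (funext (fun n => gE (F n) (F0 n))) ereal_sup_range_cst.
Qed.

Lemma ptoE_any_precise (e : aexpr Vars) : precise (ptoE_any R e).
Proof.
split; first by move=> t; rewrite /ptoE_any /pto_any; case: ifP.
exists (fun s => [fset e s]%fset) => s h; rewrite /ptoE_any /pto_any /=.
by case: ifP => // /eqP.
Qed.

Lemma ptoE_precise (e e' : aexpr Vars) : precise (ptoE R e e').
Proof.
split; first by move=> t; rewrite /ptoE /pto; case: ifP.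
exists (fun s => [fset e s]%fset) => s h; rewrite /ptoE /pto /=.
by case: ifP => // /andP[/eqP].
Qed.

(* Only the value stored at [e] makes the separating sum finite; if nothing is
   stored there, every summand is [+oo] and the default [0] is harmless. *)
Lemma finf_sepadd_ptoE (e : aexpr Vars) (W : nat -> fn) (s : stack Vars) (h : heap) :
  (forall v, nonneg (W v)) ->
  let v0 := odflt 0%N (val h).[? e s]%fmap in
  finf (fun v => sepadd (ptoE R e (fun=> v)) (W v)) (s, h) =
  sepadd (ptoE R e (fun=> v0)) (W v0) (s, h).
Proof.
move=> W0 v0; apply: ereal_inf_range_at => v vv0.
have [[h1 [h2 [hs [pto1 _]]]]|-> //] := sepadd_precise_cases s h (ptoE_precise e (fun=> v)).
move: pto1; rewrite /ptoE /pto /=; case: ifP => // /andP[/eqP dom1 /eqP h1e] _.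
have e1 : e s \in domf (val h1) by rewrite dom1 inE.
have he : (val h).[? e s]%fmap = Some v by rewrite -h1e (hsplit_fndl hs) e1.
by move: vv0; rewrite /v0 he eqxx.
Qed.

Definition atomic (C : prog Vars) : bool :=
  match C with
  | Assign _ _ | Alloc _ _ | Store _ _ | Lookup _ _ | Free _ => true
  | _ => false
  end.

Lemma ert_atomic_ge0 (C : prog Vars) (f : fn) : atomic C -> nonneg f -> nonneg (ert C f).
Proof.
case: C => //= [x e|x e|e e'|x e|e] _ f0.
- by move=> t; exact: f0.
- by move=> t; apply: le_trans (ereal_sup_range_ub _ 0%N); exact: sepwand_ge0.
- by apply: sepadd_ge0; [exact: (ptoE_any_precise e).1 | exact: sepwand_ge0].
- move=> t; apply/ereal_infP => _ [v _ <-].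
  by apply: sepadd_ge0; [exact: (ptoE_precise _ _).1 | exact: sepwand_ge0].
- exact: sepadd_ge0 (ptoE_any_precise e).1 f0.
Qed.

Lemma ert_atomic_fsup (C : prog Vars) (F : nat -> fn) : atomic C ->
  (forall n, nonneg (F n)) -> ert C (fsup F) = fsup (fun n => ert C (F n)).
Proof.
have substn_fsup x v : substn (fsup F) x v = fsup (fun n => substn (F n) x v) by [].
case: C => //= [x e|e e'|x e|e] _ F0.
- apply: funext => sh; rewrite /fsup ereal_sup_range_comm.
  do 2!apply: congr1; apply: funext => v.
  by rewrite substn_fsup sepwand_fsup // => n t; exact: F0.
- rewrite sepwand_fsup // sepadd_fsup //.
    exact: ptoE_any_precise.
  by move=> n; exact: sepwand_ge0.
- apply: funext => -[s h]; rewrite finf_sepadd_ptoE; last by move=> v; exact: sepwand_ge0.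
  rewrite substn_fsup sepwand_fsup; last by move=> n t; exact: F0.
  rewrite sepadd_fsup; [|exact: ptoE_precise | by move=> n; exact: sepwand_ge0].
  rewrite /fsup; do 2!apply: congr1; apply: funext => n.
  by rewrite finf_sepadd_ptoE //; move=> v; exact: sepwand_ge0.
- exact: sepadd_fsup (ptoE_any_precise e) F0.
Qed.

End ert_atomic.

Section amortized.
Context {R : realType} {Vars : finType}.
Local Notation fn := (fn R Vars).
Variable pi : state Vars -> R.

Definition chainA (X : nat -> fn) :=
  (forall n, inA pi (X n)) /\ (forall n t, X n t <= X n.+1 t).

Record contA (T : fn -> fn) : Prop := ContA {
  contA_inA : forall X, inA pi X -> inA pi (T X);
  contA_fsup : forall X, chainA X -> T (fsup X) = fsup (fun n => T (X n)) }.

Lemma fsup_inA (X : nat -> fn) : (forall n, inA pi (X n)) -> inA pi (fsup X).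
Proof. by move=> XA t; apply: le_trans (ereal_sup_range_ub _ 0%N); exact: XA. Qed.

(* Continuity along the chain [X, Y, Y, ...] yields monotonicity. *)
Lemma contA_mono (T : fn -> fn) (X Y : fn) : contA T -> inA pi X -> inA pi Y ->
  (forall t, X t <= Y t) -> forall t, T X t <= T Y t.
Proof.
move=> [_ Tsup] XA YA XY t.
pose Z n : fn := if n is 0%N then X else Y.
have Zchain : chainA Z by split; [case | case => [|n] t' /=].
have -> : Y = fsup Z.
  apply: funext => t'; apply/le_anti/andP; split.
    exact: (ereal_sup_range_ub (fun n => Z n t') 1%N).
  by apply: ereal_sup_range_le => -[|n] /=.
by rewrite (Tsup _ Zchain); exact: (ereal_sup_range_ub (fun n => T (Z n) t) 0%N).
Qed.

Lemma contA_chainA (T : fn -> fn) (X : nat -> fn) : contA T -> chainA X ->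
  chainA (fun n => T (X n)).
Proof.
move=> Tc [XA Xup]; split => [n|n]; first exact: (contA_inA Tc).
by apply: contA_mono => //; exact: XA.
Qed.

Lemma contA_id : contA id.
Proof. by split. Qed.

Lemma contA_cst (Y : fn) : inA pi Y -> contA (fun=> Y).
Proof.
move=> YA; split => // X _; apply: funext => t.
by rewrite /fsup ereal_sup_range_cst.
Qed.

Lemma contA_comp (T1 T2 : fn -> fn) : contA T1 -> contA T2 -> contA (fun X => T1 (T2 X)).
Proof.
move=> T1c T2c; split => [X XA|X Xc]; first exact: (contA_inA T1c (contA_inA T2c XA)).
by rewrite (contA_fsup T2c) // (contA_fsup T1c) //; exact: contA_chainA.
Qed.

Lemma contA_select (b : state Vars -> bool) (T1 T2 : fn -> fn) :
  contA T1 -> contA T2 -> contA (fun X t => if b t then T1 X t else T2 X t).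
Proof.
move=> T1c T2c; split => [X XA t|X Xc].
  by case: (b t); [exact: (contA_inA T1c) | exact: (contA_inA T2c)].
rewrite (contA_fsup T1c) // (contA_fsup T2c) //; apply: funext => t.
by rewrite /fsup /=; case: (b t).
Qed.

Lemma contA_shift (c : state Vars -> R) : (forall t, 0 <= c t)%R ->
  contA (fun X t => (c t)%:E + X t).
Proof.
move=> c0; split => [X XA t|X _].
  by apply: le_trans (XA t) _; rewrite leeDr // lee_fin.
apply: funext => t; rewrite /fsup addeC ereal_sup_rangeDr.
by do 2!apply: congr1; apply: funext => n; rewrite addeC.
Qed.

Lemma contA_pchoice (p : state Vars -> R) (T1 T2 : fn -> fn) :
  (forall t, 0 <= p t <= 1)%R -> contA T1 -> contA T2 ->
  contA (fun X t => (p t)%:E * T1 X t + (1 - p t)%:E * T2 X t).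
Proof.
move=> p01 T1c T2c.
have p0 t : (0 <= p t)%R by case/andP: (p01 t).
have q0 t : (0 <= 1 - p t)%R by case/andP: (p01 t) => _; rewrite subr_ge0.
have mul_gtNy (r : R) (x : \bar R) t : (0 <= r)%R -> - (pi t)%:E <= x -> -oo < r%:E * x.
  move=> r0 xA; apply: lt_le_trans (ltNyr (r * - pi t)) _.
  by rewrite EFinM EFinN lee_wpmul2l // lee_fin.
split => [X XA t|X Xc].
  have -> : - (pi t)%:E = (p t)%:E * - (pi t)%:E + (1 - p t)%:E * - (pi t)%:E.
    by rewrite -!EFinN -!EFinM -EFinD -mulrDl addrC subrK mul1r.
  apply: leeD; apply: lee_wpmul2l; rewrite ?lee_fin //.
    exact: (contA_inA T1c).
  exact: (contA_inA T2c).
have [T1A T1up] := contA_chainA T1c Xc.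
have [T2A T2up] := contA_chainA T2c Xc.
rewrite (contA_fsup T1c) // (contA_fsup T2c) //; apply: funext => t.
rewrite /fsup !ereal_sup_rangeZl // ereal_sup_rangeD //.
- by apply/nondecreasing_seqP => n; rewrite lee_wpmul2l ?lee_fin.
- by apply/nondecreasing_seqP => n; rewrite lee_wpmul2l ?lee_fin.
- exact: mul_gtNy (p0 t) (T1A 0%N t).
- exact: mul_gtNy (q0 t) (T2A 0%N t).
Qed.

Definition amortize (T : fn -> fn) : fn -> fn :=
  fun X t => T (fun t' => X t' + (pi t')%:E) t - (pi t)%:E.

Lemma contA_amortize (T : fn -> fn) :
  (forall f, nonneg f -> nonneg (T f)) ->
  (forall F, (forall n, nonneg (F n)) -> (forall n t, F n t <= F n.+1 t) ->
     T (fsup F) = fsup (fun n => T (F n))) ->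
  contA (amortize T).
Proof.
move=> T0 Tsup; have shift0 X : inA pi X -> nonneg (fun t => X t + (pi t)%:E).
  by move=> XA t; rewrite -leeBlDr // sub0e; exact: XA.
split => [X XA t|X [XA Xup]].
  by rewrite /amortize -[X in X <= _]sub0e leeD2r //; apply: T0; exact: shift0.
rewrite /amortize.
have -> : (fun t => fsup X t + (pi t)%:E) = fsup (fun n t => X n t + (pi t)%:E).
  by apply: funext => t; rewrite /fsup ereal_sup_rangeDr.
rewrite Tsup; first by apply: funext => t; rewrite /fsup -EFinN ereal_sup_rangeDr.
- by move=> n; exact: shift0.
- by move=> n t; rewrite leeD2r.
Qed.

Fixpoint kleene_iter (Phi : fn -> fn) (k : nat) : fn :=
  if k is k'.+1 then Phi (kleene_iter Phi k') else fun t => - (pi t)%:E.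

Lemma kleene_iter_chainA (Phi : fn -> fn) : contA Phi -> chainA (kleene_iter Phi).
Proof.
move=> Phic; have iterA k : inA pi (kleene_iter Phi k).
  by elim: k => [t|k IH] /=; [exact: lexx | exact: (contA_inA Phic)].
split => // k; elim: k => [|k IH] t /=; first exact: (iterA 1%N t).
by apply: contA_mono => //; exact: (iterA k.+1).
Qed.

Lemma lfpA_kleene (Phi : fn -> fn) : contA Phi -> lfpA pi Phi = fsup (kleene_iter Phi).
Proof.
move=> Phic; have iterc := kleene_iter_chainA Phic.
have supA : inA pi (fsup (kleene_iter Phi)) by apply: fsup_inA; case: iterc.
apply: funext => t; apply/le_anti/andP; split.
  apply: ereal_inf_lbound; exists (fsup (kleene_iter Phi)) => //; split => // t'.
  rewrite (contA_fsup Phic iterc); apply: ereal_sup_range_le => n.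
  exact: (ereal_sup_range_ub (fun k => kleene_iter Phi k t') n.+1).
apply/ereal_infP => _ [Y [YA Yfix] <-]; apply: ereal_sup_range_le => k.
elim: k t => [|k IH] t /=; first exact: YA.
apply: le_trans (Yfix t); apply: contA_mono => //; exact: iterc.1.
Qed.

Lemma iv_ite (b : bool) (x y : \bar R) : iv R b * x + iv R (~~ b) * y = if b then x else y.
Proof. by case: b; rewrite /iv /= mul1e mul0e ?adde0 ?add0e. Qed.

Definition while_step (phi : bexpr Vars) (F : fn -> fn) (X Y : fn) : fn :=
  fun t => iv R (~~ phi t.1) * X t + iv R (phi t.1) * F Y t.

Lemma while_stepE (phi : bexpr Vars) (F : fn -> fn) (X Y : fn) :
  while_step phi F X Y = fun t => if phi t.1 then F Y t else X t.
Proof. by apply: funext => t; rewrite /while_step addeC iv_ite. Qed.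

Section while_loop.
Variables (phi : bexpr Vars) (F : fn -> fn).
Hypothesis Fc : contA F.

Lemma contA_while_step (X : fn) : inA pi X -> contA (while_step phi F X).
Proof.
move=> XA; have -> : while_step phi F X = fun Y t => if phi t.1 then F Y t else X t.
  by apply: funext => Y; exact: while_stepE.
by apply: contA_select => //; exact: contA_cst.
Qed.

Lemma contA_kleene_iter_while (k : nat) :
  contA (fun X => kleene_iter (while_step phi F X) k).
Proof.
elim: k => [|k IH] /=; first by apply: contA_cst => t; exact: lexx.
have -> : (fun X => while_step phi F X (kleene_iter (while_step phi F X) k)) =
    fun X t => if phi t.1 then F (kleene_iter (while_step phi F X) k) t else X t.
  by apply: funext => X; exact: while_stepE.
by apply: contA_select; [exact: contA_comp | exact: contA_id].
Qed.

Lemma contA_while : contA (fun X => lfpA pi (while_step phi F X)).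
Proof.
have lfpE X : inA pi X ->
    lfpA pi (while_step phi F X) = fsup (fun k => kleene_iter (while_step phi F X) k).
  by move=> XA; apply: lfpA_kleene; exact: contA_while_step.
split => [X XA|X Xc].
  rewrite lfpE //; apply: fsup_inA => k; exact: (contA_inA (contA_kleene_iter_while k)).
have supA := fsup_inA Xc.1.
rewrite lfpE // (funext (fun n => lfpE _ (Xc.1 n))).
apply: funext => t; rewrite /fsup ereal_sup_range_comm; do 2!apply: congr1.
by apply: funext => k; rewrite (contA_fsup (contA_kleene_iter_while k) Xc).
Qed.

End while_loop.

Lemma ratr_prob_ge0_le1 (p : prob) : (0 <= (ratr (val p) : R) <= 1)%R.
Proof.
case: p => q /= /andP[q0 q1].
by rewrite ler0q q0 /= -(rmorph1 (@ratr R)) ler_rat.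
Qed.

Lemma aert_contA (C : prog Vars) : contA (aert pi C).
Proof.
elim: C => [e|x e|x e|e e'|x e|e|C1 IH1 p C2 IH2|phi C1 IH1 C2 IH2|C1 IH1 C2 IH2|phi C IH] /=.
1: by apply: (contA_shift (c := fun t => ((e t.1)%:R)%R)) => t; exact: ler0n.
1-5: by apply: contA_amortize => [f|F F0 _]; [exact: ert_atomic_ge0 | exact: ert_atomic_fsup].
- apply: (contA_pchoice (p := fun t => ratr (val (p t.1)))) IH1 IH2 => t.
  exact: ratr_prob_ge0_le1.
- have -> : (fun X t => iv R (phi t.1) * aert pi C1 X t + iv R (~~ phi t.1) * aert pi C2 X t)
      = fun X t => if phi t.1 then aert pi C1 X t else aert pi C2 X t.
    by apply: funext => X; apply: funext => t; exact: iv_ite.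
  exact: contA_select.
- exact: contA_comp.
- exact: (contA_while phi IH).
Qed.

End amortized.

Theorem mainTheorem3 (R : realType) (Vars : finType)
  (pi : state Vars -> R) (pi_ge0 : forall t, (0 <= pi t)%R)
  (C : prog Vars) (X : nat -> fn R Vars)
  (XA : forall n, inA pi (X n))
  (Xchain : forall n t, X n t <= X n.+1 t) :
  aert pi C (fsup X) = fsup (fun n => aert pi C (X n)).
Proof. exact: (contA_fsup (aert_contA pi C)). Qed.
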